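(* Let $q$ be a prime power and let $s,t$ be non-negative integers with $s+t>0$ and $t<q$. Put $n=s(q+1)+t+1$. Then the $[n,2,sq+t;(q-1)(t+1)]_q$ linear code is AFER-optimal; that is, there exists an $[n,2,sq+t]_q$ linear code having exactly $(q-1)(t+1)$ codewords of weight $sq+t$, the largest minimum distance of an $[n,2]_q$ linear code is $d(n,2,q)=sq+t$, and every $[n,2,sq+t]_q$ linear code has at least $(q-1)(t+1)$ codewords of weight $sq+t$, i.e. $e(n,2,q)=(q-1)(t+1)$.
   Context: An $[n,k]_q$ linear code is a $k$-dimensional subspace of $\mathbb{F}_q^n$; the weight of a vector is its number of nonzero coordinates; an $[n,k,d]_q$ code is one with minimum nonzero weight $d$, and $A_d(C)$ (the error coefficient) is the number of codewords of weight $d$. $d(n,k,q)$ denotes the largest minimum distance of an $[n,k]_q$ linear code, and $e(n,k,q)$ the smallest value of $A_{d(n,k,q)}(C)$ over all $[n,k,d(n,k,q)]_q$ linear codes $C$. An $[n,k,d]_q$ code $C$ is AFER-optimal if $d=d(n,k,q)$ and $A_d(C)=e(n,k,q)$. *)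

From HB Require Import structures.
From mathcomp Require Import all_boot all_order all_algebra all_field.
Set Implicit Arguments. Unset Strict Implicit. Unset Printing Implicit Defensive.
Import GRing.Theory.
Local Open Scope ring_scope.

(* Linear codes over a finite field F (q = #|F|): an [n,k]_q code is a
   k-dimensional subspace of F^n = 'rV[F]_n. *)

Definition wt (F : finFieldType) (n : nat) (c : 'rV[F]_n) : nat :=
  #|[set i : 'I_n | c 0 i != 0]|.

Definition is_code (F : finFieldType) (n k : nat) (C : {vspace 'rV[F]_n}) : Prop :=
  \dim C = k.

Definition has_min_dist (F : finFieldType) (n : nat) (C : {vspace 'rV[F]_n}) (d : nat)
  : Prop :=
  (exists2 c, c \in C & (c != 0) && (wt c == d)) /\
  (forall c, c \in C -> c != 0 -> (d <= wt c)%N).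

Definition A_w (F : finFieldType) (n : nat) (C : {vspace 'rV[F]_n}) (w : nat) : nat :=
  #|[set c : 'rV[F]_n | (c \in C) && (wt c == w)]|.

From HB Require Import structures.
From mathcomp Require Import all_boot all_order all_algebra all_field.
From mathcomp Require Import zify.
Set Implicit Arguments. Unset Strict Implicit. Unset Printing Implicit Defensive.
Import GRing.Theory.

(* Counting the pairs (codeword, coordinate where it is nonzero) of a k-dimensional code C of
   length n over F_q gives  \sum_(c in C) wt c <= n (q^k - q^(k-1)),  with equality when no
   coordinate vanishes on all of C, because the codewords vanishing at a coordinate form a
   hyperplane of C (or all of C).  For k = 2 and minimum distance d this is the Plotkin bound
   d (q^2 - 1) <= n q (q - 1), which forces d <= s q + t; and since a codeword of weight other
   than d has weight at least d + 1, it also gives (d + 1)(q^2 - 1) <= n q (q - 1) + A_d, which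
   for d = s q + t reads A_d >= (q - 1)(t + 1).
   Both bounds are attained by the code whose generator matrix has as columns s copies of every
   point of the projective line PG(1, q) followed by t + 1 affine points: a nonzero message
   (x, y) vanishes at exactly one point of PG(1, q), so every nonzero codeword has weight
   s q + t or s q + t + 1 and equality holds in the count. *)

Section WeightSums.
Variables (F : finFieldType) (n : nat).
Implicit Types (C : {vspace 'rV[F]_n}) (c : 'rV[F]_n) (i : 'I_n).

Definition full_support C : Prop := forall i, exists2 c, c \in C & (c 0 i != 0)%R.

Definition vanishing_at C i : {set 'rV[F]_n} := [set c in C | (c 0 i == 0)%R].

Lemma wt0 : wt (0%R : 'rV[F]_n) = 0.
Proof. by apply/eqP; rewrite cards_eq0; apply/eqP/setP => i; rewrite !inE mxE eqxx. Qed.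

Lemma wtE c : wt c = \sum_i (c 0 i != 0)%R.
Proof. by rewrite /wt -sum1dep_card big_mkcond. Qed.

Lemma A_wE C d : A_w C d = \sum_(c in C) (wt c == d).
Proof. by rewrite /A_w -sum1dep_card big_mkcondr; apply: eq_bigr => c _; case: eqP. Qed.

Lemma sum_code_nonzero C (f : 'rV[F]_n -> nat) :
  \sum_(c in C) f c = f 0%R + \sum_(c in C | c != 0%R) f c.
Proof. by rewrite (bigD1 0%R) ?mem0v. Qed.

Lemma sum_const_code_nonzero C k : \sum_(c in C | c != 0%R) k = k * (#|F| ^ \dim C).-1.
Proof.
rewrite -card_vspace [in RHS](cardD1 0%R) mem0v sum_nat_const mulnC.
by congr (_ * _); apply: eq_card => c; rewrite !inE andbC.
Qed.

Lemma card_vanishing_at C i :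
  #|F| ^ (\dim C).-1 <= #|vanishing_at C i| /\
  ((exists2 c, c \in C & (c 0 i != 0)%R) -> #|vanishing_at C i| = #|F| ^ (\dim C).-1).
Proof.
pose f := linfun (@col F 1 n i).
have fE c : (f c == 0)%R = (c 0 i == 0)%R.
  rewrite lfunE /=; apply/eqP/eqP => [/matrixP/(_ 0 0)%R|ci0]; first by rewrite !mxE.
  by apply/matrixP => a b; rewrite !ord1 !mxE.
have card_ker : #|vanishing_at C i| = #|F| ^ \dim (C :&: lker f).
  by rewrite -card_vspace; apply: eq_card => c; rewrite inE memv_cap memv_ker fE.
have q_gt0 : 0 < #|F| := ltnW (card_finNzRing_gt1 F).
have dim_sum : \dim (C :&: lker f) + \dim (f @: C) = \dim C := limg_ker_dim f C.
have dim_img : \dim (f @: C) <= 1 by apply: leq_trans (dimvS (subvf _)) _; rewrite dimvf.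
rewrite card_ker; split; first by rewrite leq_pexp2l //; lia.
case=> c cC ci; have : \dim (f @: C) != 0.
  by rewrite dimv_eq0; apply: contraNneq ci => fC0; rewrite -fE -memv0 -fC0 memv_img.
by move=> img_neq0; rewrite (_ : \dim (C :&: lker f) = (\dim C).-1) //; lia.
Qed.

Lemma sum_wt_codeE C : \sum_(c in C) wt c = \sum_i (#|C| - #|vanishing_at C i|).
Proof.
under eq_bigr do rewrite wtE; rewrite exchange_big; apply: eq_bigr => i _.
have -> : #|vanishing_at C i| = \sum_(c in C) (c 0 i == 0)%R.
  by rewrite -sum1dep_card big_mkcondr.
rewrite -sum1_card.
have -> : \sum_(c in C) 1 = \sum_(c in C) (c 0 i != 0)%R + \sum_(c in C) (c 0 i == 0)%R.
  by rewrite -big_split; apply: eq_bigr => c _; case: eqP.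
by rewrite addnK.
Qed.

Lemma sum_wt_code_le C : \sum_(c in C) wt c <= n * (#|F| ^ \dim C - #|F| ^ (\dim C).-1).
Proof.
rewrite sum_wt_codeE -[n in n * _]card_ord -sum_nat_const.
by apply: leq_sum => i _; rewrite card_vspace leq_sub2l // (card_vanishing_at C i).1.
Qed.

Lemma sum_wt_code_full C : full_support C ->
  \sum_(c in C) wt c = n * (#|F| ^ \dim C - #|F| ^ (\dim C).-1).
Proof.
move=> C_full; rewrite sum_wt_codeE -[n in n * _]card_ord -sum_nat_const.
by apply: eq_bigr => i _; rewrite card_vspace (card_vanishing_at C i).2.
Qed.

Lemma plotkin_bound C d : (forall c, c \in C -> c != 0%R -> d <= wt c) ->
  d * (#|F| ^ \dim C).-1 <= n * (#|F| ^ \dim C - #|F| ^ (\dim C).-1).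
Proof.
move=> wt_ge; apply: leq_trans (sum_wt_code_le C).
rewrite -sum_const_code_nonzero sum_code_nonzero wt0.
by apply: leq_sum => c /andP[cC c_neq0]; apply: wt_ge.
Qed.

Lemma plotkin_A_w_bound C d : (forall c, c \in C -> c != 0%R -> d <= wt c) ->
  d.+1 * (#|F| ^ \dim C).-1 <= n * (#|F| ^ \dim C - #|F| ^ (\dim C).-1) + A_w C d.
Proof.
move=> wt_ge; apply: leq_trans (leq_add (sum_wt_code_le C) (leqnn _)).
rewrite A_wE -big_split /= -sum_const_code_nonzero sum_code_nonzero.
apply: leq_trans (leq_addl _ _); apply: leq_sum => c /andP[cC c_neq0].
by have := wt_ge c cC c_neq0; case: eqP; lia.
Qed.

Lemma plotkin_A_w_eq C d : 0 < d -> full_support C ->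
    (forall c, c \in C -> c != 0%R -> d <= wt c <= d.+1) ->
  d.+1 * (#|F| ^ \dim C).-1 = n * (#|F| ^ \dim C - #|F| ^ (\dim C).-1) + A_w C d.
Proof.
move=> d_gt0 C_full wt_in.
rewrite -sum_wt_code_full // A_wE -big_split /= -sum_const_code_nonzero sum_code_nonzero.
rewrite wt0 eq_sym (gtn_eqF d_gt0); apply: eq_bigr => c /andP[cC c_neq0].
by have := wt_in c cC c_neq0; case: eqP; lia.
Qed.
End WeightSums.

Lemma wt_row_nth (F : finFieldType) (n : nat) (T : Type) (x0 : T) (cols : seq T) (f : T -> F) :
  size cols = n -> wt (\row_(i < n) f (nth x0 cols i)) = count (fun p => f p != 0)%R cols.
Proof.
move=> size_cols; subst n.
rewrite wtE -sum1_count (big_nth x0) big_mkord [in RHS]big_mkcond.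
by apply: eq_bigr => i _; rewrite mxE; case: eqP.
Qed.

Section LineCode.
Variables (F : finFieldType) (s t : nat).
Local Open Scope ring_scope.

Definition affine_line : seq (F * F) := [seq (1, a) | a <- enum F].
Definition projective_line : seq (F * F) := (0, 1) :: affine_line.
Definition line_code_columns : seq (F * F) :=
  flatten (nseq s projective_line) ++ take t.+1 affine_line.

Definition on_line (x y : F) (p : F * F) : bool := x * p.1 + y * p.2 == 0.

Lemma count_on_affine_line x y : (x != 0) || (y != 0) ->
  count (on_line x y) affine_line = (y != 0).
Proof.
move=> xy_neq0; rewrite count_map.
have [y0 | y_neq0] := eqVneq y 0.
  rewrite y0 eqxx orbF in xy_neq0 *; apply/eqP; rewrite -leqn0 leqNgt -has_count.
  by apply/hasP => -[a _]; rewrite /= /on_line mul0r addr0 mulr1 (negbTE xy_neq0).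
rewrite (eq_count (a2 := pred1 (- x / y))) ?count_uniq_mem ?enum_uniq ?mem_enum //.
move=> a; rewrite /on_line /= mulr1 addrC addr_eq0.
by rewrite -[a == _](inj_eq (mulfI y_neq0)) mulrCA mulfV ?mulr1.
Qed.

Lemma count_on_projective_line x y : (x != 0) || (y != 0) ->
  count (on_line x y) projective_line = 1%N.
Proof.
move=> xy_neq0; rewrite /= count_on_affine_line // /on_line /= mulr0 add0r mulr1.
by case: eqP.
Qed.

Lemma count_on_line_code_columns x y : (x != 0) || (y != 0) ->
  exists2 z, (z <= 1)%N & count (on_line x y) line_code_columns = (s + z)%N.
Proof.
move=> xy_neq0; exists (count (on_line x y) (take t.+1 affine_line)).
  apply: leq_trans (leq_b1 (y != 0)); rewrite -(count_on_affine_line xy_neq0).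
  by rewrite -{2}(cat_take_drop t.+1 affine_line) count_cat leq_addr.
rewrite count_cat count_flatten map_nseq sumn_nseq count_on_projective_line //.
by rewrite mul1n.
Qed.

Lemma size_line_code_columns :
  (t < #|F|)%N -> size line_code_columns = (s * (#|F| + 1) + t + 1)%N.
Proof.
move=> t_lt_q; rewrite size_cat size_flatten /shape map_nseq sumn_nseq size_takel.
  by rewrite /= size_map -cardE mulnC !addn1 addnS.
by rewrite size_map -cardE.
Qed.

Variable n : nat.
Hypotheses (t_lt_q : (t < #|F|)%N) (n_eq : n = (s * (#|F| + 1) + t + 1)%N).

Definition line_code_row (f : F * F -> F) : 'rV[F]_n :=
  \row_(i < n) f (nth (0, 0) line_code_columns i).

Definition line_code : {vspace 'rV[F]_n} := <<[:: line_code_row fst; line_code_row snd]>>%VS.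

Lemma line_code_row_lin x y :
  x *: line_code_row fst + y *: line_code_row snd = line_code_row (fun p => x * p.1 + y * p.2).
Proof. by apply/rowP => i; rewrite !mxE. Qed.

Lemma wt_line_code_row_lin x y : (x != 0) || (y != 0) ->
  (s * #|F| + t <= wt (x *: line_code_row fst + y *: line_code_row snd) <= (s * #|F| + t).+1)%N.
Proof.
move=> xy_neq0; have [z z_le1 count_on] := count_on_line_code_columns xy_neq0.
rewrite line_code_row_lin wt_row_nth ?size_line_code_columns //.
rewrite -[count _ _]/(count (predC (on_line x y)) line_code_columns).
have := count_predC (on_line x y) line_code_columns.
by rewrite count_on size_line_code_columns // mulnDr muln1; lia.
Qed.

Lemma line_codeP c :
  reflect (exists x y, c = x *: line_code_row fst + y *: line_code_row snd) (c \in line_code).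
Proof.
rewrite /line_code span_cons span_seq1; apply: (iffP memv_addP).
  by case=> _ /vlineP[x ->] [_ /vlineP[y ->] ->]; exists x, y.
case=> x [y ->]; exists (x *: line_code_row fst); first exact/memvZ/memv_line.
by exists (y *: line_code_row snd); first exact/memvZ/memv_line.
Qed.

Lemma wt_line_code c : c \in line_code -> c != 0 ->
  (s * #|F| + t <= wt c <= (s * #|F| + t).+1)%N.
Proof.
case/line_codeP=> x [y ->] c_neq0; apply: wt_line_code_row_lin.
apply: contraNT c_neq0; rewrite negb_or !negbK => /andP[/eqP-> /eqP->].
by rewrite !scale0r addr0.
Qed.

Lemma full_support_line_code : full_support line_code.
Proof.
move=> i; have cols_sub : {subset line_code_columns <= projective_line}.
  move=> p; rewrite mem_cat => /orP[/flattenP[l /nseqP[-> _]] // | /mem_take p_aff].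
  by rewrite inE p_aff orbT.
have /cols_sub : nth (0, 0) line_code_columns i \in line_code_columns.
  by rewrite mem_nth // size_line_code_columns // -n_eq.
rewrite inE => /predU1P[p_eq | /mapP[a _ p_eq]].
  by exists (line_code_row snd); rewrite ?memv_span ?inE ?eqxx ?orbT // mxE p_eq oner_neq0.
by exists (line_code_row fst); rewrite ?memv_span ?inE ?eqxx // mxE p_eq oner_neq0.
Qed.

Lemma dim_line_code : (0 < s + t)%N -> \dim line_code = 2%N.
Proof.
move=> st_gt0.
have lin_neq0 x y : (x != 0) || (y != 0) -> x *: line_code_row fst + y *: line_code_row snd != 0.
  move=> /wt_line_code_row_lin/andP[wt_ge _]; apply: contraTneq wt_ge => ->.
  rewrite wt0 -ltnNge; have := card_finNzRing_gt1 F; nia.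
apply/eqP; rewrite [_ == _]free_cons seq1_free span_seq1; apply/andP; split.
  apply/vlineP=> -[k g1_eq]; have := lin_neq0 1 (- k).
  by rewrite oner_neq0 g1_eq scaleNr scale1r subrr eqxx => /(_ isT).
by have := lin_neq0 0 1; rewrite oner_neq0 orbT scale0r add0r scale1r; apply.
Qed.
End LineCode.

Lemma afer_count_identity q s t :
  ((s * q + t).+1 * (q ^ 2).-1
   = (s * (q + 1) + t + 1) * (q ^ 2 - q ^ 1) + (q - 1) * (t + 1))%N.
Proof. by rewrite expn1 -mulnn; nia. Qed.

Lemma has_min_dist_A_w_gt0 (F : finFieldType) n (C : {vspace 'rV[F]_n}) d :
  (0 < d)%N -> (0 < A_w C d)%N -> (forall c, c \in C -> c != 0%R -> (d <= wt c)%N) ->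
  has_min_dist C d.
Proof.
move=> d_gt0; rewrite card_gt0 => /set0Pn[c]; rewrite inE => /andP[cC /eqP wt_c] wt_ge.
split=> //; exists c; rewrite // wt_c eqxx andbT.
by apply: contraTneq d_gt0 => c0; rewrite -wt_c c0 wt0.
Qed.

Section AferParameters.
Variables (F : finFieldType) (s t n : nat).
Hypothesis n_eq : n = (s * (#|F| + 1) + t + 1)%N.

Lemma dim2_min_dist_le (C : {vspace 'rV[F]_n}) d :
  \dim C = 2%N -> has_min_dist C d -> (d <= s * #|F| + t)%N.
Proof.
move=> dimC [_ wt_ge]; have := plotkin_bound wt_ge; rewrite dimC n_eq.
have := card_finNzRing_gt1 F; move: #|F| => q q_gt1 bound.
rewrite leqNgt; apply/negP => d_gt.
have := leq_trans (leq_mul d_gt (leqnn (q ^ 2).-1)) bound.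
by rewrite afer_count_identity -{2}[_ * (_ - _)]addn0 leq_add2l leqn0 muln_eq0; lia.
Qed.

Lemma dim2_A_w_ge (C : {vspace 'rV[F]_n}) :
  \dim C = 2%N -> has_min_dist C (s * #|F| + t) ->
  ((#|F| - 1) * (t + 1) <= A_w C (s * #|F| + t))%N.
Proof.
move=> dimC [_ wt_ge]; have := plotkin_A_w_bound wt_ge.
by rewrite dimC; move: (A_w _ _) => A; rewrite n_eq afer_count_identity leq_add2l.
Qed.

Lemma line_code_afer : (0 < s + t)%N -> (t < #|F|)%N ->
  let C := line_code F s t n in
  [/\ is_code 2 C, has_min_dist C (s * #|F| + t)
    & A_w C (s * #|F| + t) = ((#|F| - 1) * (t + 1))%N].
Proof.
move=> st_gt0 t_lt_q C; have dimC : \dim C = 2%N := dim_line_code t_lt_q n_eq st_gt0.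
have d_gt0 : (0 < s * #|F| + t)%N by have := card_finNzRing_gt1 F; nia.
have A_eq : A_w C (s * #|F| + t) = ((#|F| - 1) * (t + 1))%N.
  have := plotkin_A_w_eq d_gt0 (full_support_line_code t_lt_q n_eq)
                                (wt_line_code t_lt_q n_eq).
  by rewrite dimC; move: (A_w _ _) => A; rewrite n_eq afer_count_identity => /addnI.
split=> //; apply: has_min_dist_A_w_gt0 => //.
  by rewrite A_eq muln_gt0 subn_gt0 card_finNzRing_gt1 addn1.
by move=> c cC c_neq0; have /andP[] := wt_line_code t_lt_q n_eq cC c_neq0.
Qed.
End AferParameters.

Theorem theorem3 (F : finFieldType) (s t n : nat) :
  (0 < s + t)%N -> (t < #|F|)%N -> n = (s * (#|F| + 1) + t + 1)%N ->
  [/\ (exists C : {vspace 'rV[F]_n},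
         [/\ is_code 2 C, has_min_dist C (s * #|F| + t)%N &
             A_w C (s * #|F| + t)%N = ((#|F| - 1) * (t + 1))%N]),
      (forall (C : {vspace 'rV[F]_n}) (d : nat),
         is_code 2 C -> has_min_dist C d -> (d <= s * #|F| + t)%N) &
      (forall C : {vspace 'rV[F]_n},
         is_code 2 C -> has_min_dist C (s * #|F| + t)%N ->
         ((#|F| - 1) * (t + 1) <= A_w C (s * #|F| + t))%N)].
Proof.
move=> st_gt0 t_lt_q n_eq; split.
- by exists (line_code F s t n); apply: line_code_afer.
- by move=> C d; apply: dim2_min_dist_le.
- by move=> C; apply: dim2_A_w_ge.
Qed.
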